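(* Let $M$ be a matroid on ground set $E$ and let $<$ be a pinned broken line shelling of $\mathcal{I}(M)$ whose first basis is $B$. For each non-loop element $i\in E\setminus B$, let $B_i$ be the basis whose restriction set with respect to $<$ is $\{i\}$. Let $I$ be an independent set of $M$ disjoint from $B$. Then for every $j\ge0$, the number of bases $B'$ whose restriction set has $|I|+j$ elements and such that the atoms of $\mathrm{Int}_<(M)$ below $B'$ are exactly the bases $\{B_i : i\in I\}$ is $h_j((M/I)|_B)$. If $\mathrm{Int}_<(M)$ is ranked, then the cardinality of the restriction sets may be replaced by the rank in $\mathrm{Int}_<(M)$.
   Context: Linear functionals $\ell\in(\mathbb{R}^E)^*$ are identified with functions $E\to\mathbb{R}$, and $\ell(B)=\sum_{b\in B}\ell(b)$. A broken line shelling is an ordering $B_1<\dots<B_n$ of all bases of $M$ such that for each $i$ there is a linear functional $\ell_i$ (a witness) with $\ell_i(B_j)<\ell_i(B_i)$ iff $j<i$; such an order is a shelling order of the independence complex $\mathcal{I}(M)$. It is pinned if the witnesses can be chosen so that for every $i$, $B_1$ is the basis of smallest $\ell_i$-weight. For a shelling order $F_1<\dots<F_k$ of a pure simplicial complex, the restriction set $\mathcal{R}(F_j)$ is the unique subset of $F_j$ such that the faces of $\langle F_1,\dots,F_j\rangle$ not in $\langle F_1,\dots,F_{j-1}\rangle$ are exactly the subsets of $F_j$ containing $\mathcal{R}(F_j)$. $\mathrm{Int}_<(M)$ is the poset on bases with $B'\preceq B''$ iff $\mathcal{R}(B')\subseteq\mathcal{R}(B'')$; its atoms are the elements covering its minimum.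 A loop is an element in no basis. $M/I$ is the contraction of $M$ by $I$, and $(M/I)|_B$ its restriction to the ground set $B$. For a matroid $N$, $h_j(N)$ is the $j$-th entry of the $h$-vector of its independence complex, where for a $(d-1)$-dimensional complex with $f_{i}$ faces of dimension $i$, $\sum_j h_j x^j=\sum_j f_{j-1}x^j(1-x)^{d-j}$. *)

From HB Require Import structures.
From mathcomp Require Import all_boot all_order all_algebra.
From mathcomp Require Import reals.
Set Implicit Arguments. Unset Strict Implicit. Unset Printing Implicit Defensive.
Import Order.TTheory GRing.Theory Num.Theory.

Section Defs.
Variable E : finType.

(** A matroid on the ground set E (all of the finite type E), given by its
    set of bases: nonempty family satisfying basis exchange. *)
Definition matroid_bases (Bs : {set {set E}}) : Prop :=
  Bs != set0 /\
  forall B1 B2, B1 \in Bs -> B2 \in Bs ->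
    forall x, x \in B1 :\: B2 ->
      exists2 y, y \in B2 :\: B1 & (y |: (B1 :\ x)) \in Bs.

Definition indep (Bs : {set {set E}}) (X : {set E}) : bool :=
  [exists B in Bs, X \subset B].

Definition mrank (Bs : {set {set E}}) (X : {set E}) : nat :=
  \max_(Y : {set E} | (Y \subset X) && indep Bs Y) #|Y|.

(** independent sets of (M/I)|_B : J subset of B, disjoint from I, with
    r_M(J u I) = |J| + r_M(I) (independence in the contraction M/I). *)
Definition contr_restr_indep (Bs : {set {set E}}) (I B : {set E})
  (J : {set E}) : bool :=
  [&& J \subset B, [disjoint J & I] &
      mrank Bs (J :|: I) == #|J| + mrank Bs I].

(** h-vector of the (independence) simplicial complex given by a predicate
    on faces.  d = max face size (= dimension + 1),
    fnum k = number of faces with k elements (= f_{k-1}),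
    sum_j h_j x^j = sum_j f_{j-1} x^j (1-x)^(d-j). *)
Definition cx_d (ind : pred {set E}) : nat := \max_(X : {set E} | ind X) #|X|.
Definition fnum (ind : pred {set E}) (k : nat) : nat :=
  #|[set X : {set E} | ind X & #|X| == k]|.
Definition hpoly (ind : pred {set E}) : {poly int} :=
  (\sum_(k < (cx_d ind).+1)
     ((fnum ind k)%:Z%:P * 'X^k * (1 - 'X) ^+ (cx_d ind - k)))%R.
Definition hvec (ind : pred {set E}) (j : nat) : int := ((hpoly ind)`_j)%R.

Definition wt (R : realType) (l : E -> R) (B : {set E}) : R :=
  (\sum_(b in B) l b)%R.

(** s lists every basis exactly once: s = B_1 < ... < B_n (0-indexed) *)
Definition orders_bases (Bs : {set {set E}}) (s : seq {set E}) : Prop :=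
  uniq s /\ forall B, (B \in s) = (B \in Bs).

Definition broken_line_shelling (R : realType) (Bs : {set {set E}}) (s : seq {set E}) : Prop :=
  orders_bases Bs s /\
  forall i, i < size s -> exists l : E -> R,
    forall j, j < size s ->
      (wt l (nth set0 s j) < wt l (nth set0 s i))%R = (j < i).

Definition pinned_bls (R : realType) (Bs : {set {set E}}) (s : seq {set E}) : Prop :=
  orders_bases Bs s /\
  forall i, i < size s -> exists l : E -> R,
    (forall j, j < size s ->
      (wt l (nth set0 s j) < wt l (nth set0 s i))%R = (j < i)) /\
    (forall j, 0 < j < size s -> (wt l (nth set0 s 0) < wt l (nth set0 s j))%R).

(** Restriction set of F_j for the ordering s: Rs subset F_j such that the
    faces of <F_1..F_j> not in <F_1..F_{j-1}> are exactly the subsets of F_j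
    containing Rs. *)
Definition is_restr (s : seq {set E}) (j : nat) (Rs : {set E}) : bool :=
  (Rs \subset nth set0 s j) &&
  [forall G : {set E},
     ([exists k : 'I_(size s), (k <= j) && (G \subset nth set0 s k)] &&
      [forall k : 'I_(size s), (k < j) ==> ~~ (G \subset nth set0 s k)])
     == ((Rs \subset G) && (G \subset nth set0 s j))].

Definition restr (s : seq {set E}) (j : nat) : {set E} :=
  odflt set0 [pick Rs | is_restr s j Rs].

Definition restrB (s : seq {set E}) (B : {set E}) : {set E} :=
  restr s (index B s).

Definition int_le (s : seq {set E}) (B1 B2 : {set E}) : bool := restrB s B1 \subset restrB s B2.
Definition int_lt (s : seq {set E}) (B1 B2 : {set E}) : bool := restrB s B1 \proper restrB s B2.
Definition int_min (Bs : {set {set E}}) (s : seq {set E}) (m : {set E}) : bool :=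
  (m \in Bs) && [forall C in Bs, int_le s m C].
Definition int_covers (Bs : {set {set E}}) (s : seq {set E}) (x y : {set E}) : bool :=
  [&& x \in Bs, y \in Bs, int_lt s x y &
      ~~ [exists C in Bs, int_lt s x C && int_lt s C y]].
Definition int_atom (Bs : {set {set E}}) (s : seq {set E}) (A : {set E}) : bool :=
  [exists m, int_min Bs s m && int_covers Bs s m A].

Definition atoms_below (Bs : {set {set E}}) (s : seq {set E}) (B' : {set E}) : {set {set E}} :=
  [set A in Bs | int_atom Bs s A && int_le s A B'].

Definition Bi_set (Bs : {set {set E}}) (s : seq {set E}) (I : {set E}) : {set {set E}} :=
  [set A in Bs | [exists i in I, restrB s A == [set i]]].

Definition int_rank_fun (Bs : {set {set E}}) (s : seq {set E}) (rho : {set E} -> nat) : Prop :=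
  (forall m, int_min Bs s m -> rho m = 0%N) /\
  (forall x y, int_covers Bs s x y -> rho y = (rho x).+1).

End Defs.

From HB Require Import structures.
From mathcomp Require Import all_boot all_order all_algebra.
From mathcomp Require Import reals.
From mathcomp Require Import zify.
Set Implicit Arguments. Unset Strict Implicit. Unset Printing Implicit Defensive.
Import Order.TTheory GRing.Theory Num.Theory.

(* In a broken line shelling the restriction set R(B') of a basis B' consists of the e in B'
   such that B' - e lies in an earlier basis; pinning forces B' \ B to lie in R(B'), because
   B is lighter than every basis obtained from it by one exchange.  Hence the atoms of
   Int_<(M) are the bases B_i with R(B_i) = {i}, i a non-loop outside B, the atoms below B'
   are the B_i with i in B' \ B, and they form {B_i : i in I} exactly when B' \ B = I; for
   such B', R(B') is the disjoint union of I and R(B') /\ B.  Sending a face J of (M/I)|_B to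
   the first basis containing J u I partitions the faces into the Boolean intervals
   [R(B') /\ B, B' /\ B] over these B', whose tops all have r(M) - |I| elements, and for such
   a partition h_j counts the intervals whose bottom has j elements.  Finally any rank
   function of Int_<(M) equals |R(-)|: dropping a well-chosen element of R(B') leaves the
   restriction set of another basis, which B' then covers. *)

Section SetExchange.
Variable E : finType.

Lemma card_exchange (A : {set E}) x y : x \in A -> y \notin A -> #|y |: (A :\ x)| = #|A|.
Proof.
move=> xA yA; rewrite cardsU1 in_setD1 (negbTE yA) andbF (cardsD1 x A) xA.
by rewrite add1n.
Qed.

Lemma setD_exchange (A C : {set E}) x y : x \notin C -> y \in C ->
  (y |: (A :\ x)) :\: C = (A :\: C) :\ x.
Proof.
move=> xC yC; apply/setP => z; rewrite !inE.
have [->|_] := eqVneq z y; first by rewrite yC !andbF.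
by have [->|_] := eqVneq z x; rewrite ?(negbTE xC) ?andbF.
Qed.

End SetExchange.

Section MatroidBases.
Variables (E : finType) (Bs : {set {set E}}).
Hypothesis bases_Bs : matroid_bases Bs.

Lemma basis_exchange (B1 B2 : {set E}) x : B1 \in Bs -> B2 \in Bs -> x \in B1 :\: B2 ->
  exists2 y, y \in B2 :\: B1 & y |: (B1 :\ x) \in Bs.
Proof. by case: bases_Bs => _ exch B1s B2s; apply: exch. Qed.

Lemma basis_sub_eq (B1 B2 : {set E}) : B1 \in Bs -> B2 \in Bs -> B1 \subset B2 -> B1 = B2.
Proof.
move=> B1s B2s sB12; apply/eqP; rewrite eqEsubset sB12 /=.
apply/subsetP => y yB2; apply: contraT => yB1.
have yD : y \in B2 :\: B1 by rewrite inE yB1.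
have [x] := basis_exchange B2s B1s yD.
by rewrite inE => /andP[/negbTE xB2 /(subsetP sB12)]; rewrite xB2.
Qed.

Lemma card_bases (B1 B2 : {set E}) : B1 \in Bs -> B2 \in Bs -> #|B1| = #|B2|.
Proof.
move=> + B2s; have [n] := ubnP #|B1 :\: B2|; elim: n => // n IH in B1 *.
rewrite ltnS => leD B1s; have [/eqP|[x xD]] := set_0Vmem (B1 :\: B2).
  by rewrite setD_eq0 => /(basis_sub_eq B1s B2s) ->.
have [y yD B1's] := basis_exchange B1s B2s xD.
move: xD yD; rewrite !inE => /andP[xB2 xB1] /andP[yB1 yB2].
rewrite -(card_exchange xB1 yB1) IH // (setD_exchange _ xB2 yB2).
by apply: leq_trans leD; apply/proper_card/properD1; rewrite inE xB2.
Qed.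

Lemma indepP (X : {set E}) : reflect (exists2 B, B \in Bs & X \subset B) (indep Bs X).
Proof. exact: (iffP exists_inP). Qed.

Lemma indepS (X Y : {set E}) : X \subset Y -> indep Bs Y -> indep Bs X.
Proof.
by move=> sXY /indepP[B Bs_B sYB]; apply/indepP; exists B; rewrite // (subset_trans sXY).
Qed.

Lemma basis_indep (B : {set E}) : B \in Bs -> indep Bs B.
Proof. by move=> Bs_B; apply/indepP; exists B. Qed.

Lemma indep0 : indep Bs set0.
Proof. by case: bases_Bs => /set0Pn[B Bs_B] _; apply/indepP; exists B; rewrite ?sub0set. Qed.

Lemma indep_basis (X B : {set E}) : indep Bs X -> B \in Bs -> #|B| <= #|X| -> X \in Bs.
Proof.
move=> /indepP[B' B's sXB'] Bs_B leBX.
suff -> : X = B' by [].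
by apply/eqP; rewrite eqEcard sXB' (card_bases B's Bs_B).
Qed.

Lemma card_setD_bases (B1 B2 : {set E}) : B1 \in Bs -> B2 \in Bs -> #|B1 :\: B2| = #|B2 :\: B1|.
Proof. by move=> B1s B2s; rewrite !cardsD (card_bases B1s B2s) setIC. Qed.

(* Exchange the elements of BX :\: BY outside X into BY until BX meets Y :\: X; if it never
   does, Y :\: X and X :\: Y contain the equinumerous BY :\: BX and BX :\: BY. *)
Lemma indep_augment (X Y : {set E}) : indep Bs X -> indep Bs Y -> #|X| < #|Y| ->
  exists2 y, y \in Y :\: X & indep Bs (y |: X).
Proof.
move=> /indepP[BX + sX] /indepP[BY BYs sY] ltXY.
have [n] := ubnP #|BX :\: BY|; elim: n => // n IH in BX sX *.
rewrite ltnS => leD BXs.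
have [noYX|[y]] := set_0Vmem ((Y :\: X) :&: BX); last first.
  rewrite !inE => /andP[/andP[yX yY] yBX]; exists y; first by rewrite inE yX.
  by apply/indepP; exists BX; rewrite // subUset sub1set yBX.
have [/eqP|[x]] := set_0Vmem ((BX :\: BY) :\: X); last first.
  rewrite !inE => /andP[xX /andP[xBY xBX]].
  have xD : x \in BX :\: BY by rewrite inE xBY.
  have [y yD BX's] := basis_exchange BXs BYs xD.
  move: yD; rewrite inE => /andP[yBX yBY].
  apply: IH BX's.
    apply/subsetP => z zX; rewrite !inE (subsetP sX) // andbT orbC.
    by case: eqVneq zX xX => // ->->.
  rewrite (setD_exchange _ xBY yBY); apply: leq_trans leD.
  by apply/proper_card/properD1; rewrite !inE xBY.
rewrite setD_eq0 => sBXX; exfalso.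
have sYX : Y :\: X \subset BY :\: BX.
  apply/subsetP => z zYX; rewrite inE (subsetP sY) ?andbT; last first.
    by move: zYX; rewrite inE => /andP[].
  by apply: contraT => /negPn zBX; move/setP/(_ z): noYX; rewrite !inE zBX -in_setD zYX.
have sXY : BX :\: BY \subset X :\: Y.
  apply/subsetP => z zD; rewrite inE (subsetP sBXX) ?andbT //.
  by apply: contraT => /negPn /(subsetP sY) zBY; move: zD; rewrite inE zBY.
have := subset_leq_card sXY; rewrite -(card_setD_bases BYs BXs).
move=> /(leq_trans (subset_leq_card sYX)).
by rewrite !cardsD setIC; move: ltXY (subset_leq_card (subsetIl X Y)); lia.
Qed.

Lemma indep_extend (X U C : {set E}) : indep Bs X -> X \subset U -> C \in Bs -> C \subset U ->
  exists2 D, D \in Bs & (X \subset D) && (D \subset U).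
Proof.
move=> + + Cs sCU; have [n] := ubnP (#|C| - #|X|); elim: n => // n IH in X *.
move=> ltn iX sXU; have [leCX|ltXC] := leqP #|C| #|X|.
  by exists X; rewrite ?(indep_basis iX Cs) ?subxx.
have [y /setDP[yC yX] iyX] := indep_augment iX (basis_indep Cs) ltXC.
have [||D Ds /andP[syXD sDU]] := IH (y |: X) _ iyX.
- by rewrite cardsU1 yX; lia.
- by rewrite subUset sub1set (subsetP sCU).
by exists D; rewrite // (subset_trans (subsetUr _ _) syXD).
Qed.

Lemma exchangeable_dep (C : {set E}) e : C \in Bs -> e \notin C ->
  ~~ indep Bs (e |: [set f in C | e |: (C :\ f) \in Bs]).
Proof.
set Z := [set f in C | _] => Cs eC; apply/negP => iZ.
have sZC : Z \subset C by apply/subsetP => f; rewrite inE => /andP[].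
have [D Ds /andP[sZD sDU]] := indep_extend iZ (setUS _ sZC) Cs (subsetUr _ _).
have eD : e \in D by rewrite (subsetP sZD) ?setU11.
have [/eqP|[f /setDP[fC fD]]] := set_0Vmem (C :\: D).
  by rewrite setD_eq0 => /(basis_sub_eq Cs Ds) CD; rewrite CD eD in eC.
have sDeC : D \subset e |: (C :\ f).
  apply/subsetP => z zD; have := subsetP sDU z zD; rewrite !inE.
  have zf : z != f by apply: contraNneq fD => <-.
  by rewrite zf.
have DeC : D = e |: (C :\ f).
  by apply/eqP; rewrite eqEcard sDeC (card_bases Ds Cs) card_exchange ?leqnn.
by move: fD; rewrite (subsetP sZD) // !inE fC -DeC Ds orbT.
Qed.

Lemma basis_sym_exchange (J C : {set E}) e : J \in Bs -> C \in Bs -> e \in J :\: C ->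
  exists2 f, f \in C :\: J & (f |: (J :\ e) \in Bs) && (e |: (C :\ f) \in Bs).
Proof.
move=> Js Cs /setDP[eJ eC].
set Z := [set f in C | e |: (C :\ f) \in Bs].
have depZ := exchangeable_dep Cs eC; rewrite -/Z in depZ.
have sZC : Z \subset C by apply/subsetP => f; rewrite inE => /andP[].
suff [f fZ Jfs] : exists2 f, f \in Z & f |: (J :\ e) \in Bs.
  move: (fZ); rewrite inE => /andP[fC Cfs]; exists f; rewrite ?Jfs ?Cfs // inE fC andbT.
  apply: contraTN Jfs => fJ; have fe : f != e by apply: contraNneq eC => <-.
  have -> : f |: (J :\ e) = J :\ e by apply/setUidPr; rewrite sub1set !inE fe.
  by apply/negP => /(card_bases Js)/eqP; rewrite gtn_eqF //; exact/proper_card/properD1.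
(* A maximal independent S with Z <= S <= (J - e) u Z has at least #|J| elements since
   e |: Z is dependent, so augmenting J - e from S uses an element of Z. *)
pose T := J :\ e.
pose P S := [&& indep Bs S, Z \subset S & S \subset T :|: Z].
have PZ : P Z by rewrite /P (indepS sZC (basis_indep Cs)) subxx subsetUr.
have [S /and3P[iS sZS sST] maxS] := arg_maxnP (fun S : {set E} => #|S|) PZ.
have [ltSJ|leJS] := ltnP #|S| #|J|.
  have [j /setDP[jJ jS] ijS] := indep_augment iS (basis_indep Js) ltSJ.
  have [je|jne] := eqVneq j e.
    by rewrite (indepS _ ijS) ?je ?setUS in depZ.
  have : P (j |: S).
    by rewrite /P ijS (subset_trans sZS (subsetUr _ _)) subUset sST sub1set !inE jne jJ.
  by move=> /maxS; rewrite cardsU1 jS /= ltnn.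
have ltTS : #|T| < #|S| by apply: leq_trans leJS; exact/proper_card/properD1.
have [y /setDP[yS yT] iyT] := indep_augment (indepS (subD1set J e) (basis_indep Js)) iS ltTS.
exists y; first by move: (subsetP sST y yS); rewrite inE (negbTE yT).
by apply: (indep_basis iyT Js); rewrite cardsU1 yT (cardsD1 e J) eJ.
Qed.

Section Weights.
Variables (R : realType) (l : E -> R).
Local Open Scope ring_scope.

Lemma wt_exchange (A : {set E}) x y : x \in A -> y \notin A ->
  wt l (y |: (A :\ x)) = wt l A - l x + l y.
Proof.
move=> xA yA; rewrite /wt big_setU1 ?in_setD1 ?(negbTE yA) ?andbF //= (big_setD1 x xA) /=.
by rewrite [l x + _]addrC addrK [RHS]addrC.
Qed.

Lemma basis_improving_exchange (J C : {set E}) : J \in Bs -> C \in Bs -> wt l C < wt l J ->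
  exists e f, [/\ e \in J :\: C, f \in C :\: J, f |: (J :\ e) \in Bs & l f < l e].
Proof.
move=> Js; have [n] := ubnP #|C :\: J|; elim: n => // n IH in C *.
rewrite ltnS => leD Cs ltCJ.
have [/eqP|[e eD]] := set_0Vmem (J :\: C).
  by rewrite setD_eq0 => /(basis_sub_eq Js Cs) JC; rewrite JC ltxx in ltCJ.
have [f fD /andP[Jfs Cfs]] := basis_sym_exchange Js Cs eD.
have [ltfe|leef] := ltP (l f) (l e); first by exists e, f.
move: eD fD => /setDP[eJ eC] /setDP[fC fJ].
set C' := e |: (C :\ f).
have ltD' : (#|C' :\: J| < n)%N.
  rewrite (setD_exchange _ fJ eJ); apply: leq_trans leD.
  by apply/proper_card/properD1; rewrite inE fJ.
have ltC'J : wt l C' < wt l J.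
  by apply: le_lt_trans ltCJ; rewrite wt_exchange // -addrA gerDl addrC subr_le0.
have [e' [f' [/setDP[e'J e'C'] /setDP[f'C' f'J] Jf's lt']]] := IH C' ltD' Cfs ltC'J.
exists e', f'; split => //; rewrite inE ?e'J ?f'J ?andbT.
- apply: contra e'C' => e'C; rewrite !inE e'C andbT orbC.
  by case: eqVneq e'J => // ->; rewrite (negbTE fJ).
- by move: f'C'; rewrite !inE; case: eqVneq f'J => [->|_ _ /andP[]//]; rewrite eJ.
Qed.

End Weights.

Lemma mrank_indep (X : {set E}) : indep Bs X -> mrank Bs X = #|X|.
Proof.
move=> iX; apply/eqP; rewrite eqn_leq; apply/andP; split.
  by apply/bigmax_leqP => Y /andP[sYX _]; apply: subset_leq_card.
by apply: (leq_bigmax_cond (F := fun Y : {set E} => #|Y|)); rewrite subxx.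
Qed.

Lemma mrank_eq_card (X : {set E}) : (mrank Bs X == #|X|) = indep Bs X.
Proof.
apply/idP/idP => [|/mrank_indep->//]; apply: contraLR => iX.
have [X0|] := eqVneq X set0; first by rewrite X0 indep0 in iX.
rewrite -card_gt0 neq_ltn => X_gt0; apply/orP; left.
suff : mrank Bs X <= #|X|.-1 by lia.
apply/bigmax_leqP => Y /andP[sYX iY]; rewrite -ltnS prednK //.
by rewrite proper_card // properEneq sYX andbT; apply: contraNneq iX => <-.
Qed.

Lemma contr_restr_indepE (I B J : {set E}) : indep Bs I -> [disjoint I & B] ->
  contr_restr_indep Bs I B J = (J \subset B) && indep Bs (J :|: I).
Proof.
move=> iI dIB; rewrite /contr_restr_indep; have [sJB|] //= := boolP (J \subset B).
have dJI : [disjoint J & I] by rewrite disjoint_sym (disjointWr sJB dIB).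
rewrite dJI (mrank_indep iI) -mrank_eq_card.
by rewrite cardsU (disjoint_setI0 dJI) cards0 subn0.
Qed.

End MatroidBases.

Section Shelling.
Variables (E : finType) (Bs : {set {set E}}) (R : realType) (s : seq {set E}).
Hypothesis bases_Bs : matroid_bases Bs.

Local Notation F k := (nth set0 s k).

Definition prefix_face (k : nat) (G : {set E}) : bool :=
  [exists m : 'I_(size s), (m < k) && (G \subset F m)].

Definition restr_set (k : nat) : {set E} := [set e in F k | prefix_face k (F k :\ e)].

Definition first_facet (G : {set E}) : nat := find (fun D : {set E} => G \subset D) s.

Definition shelling_witness (k : nat) (l : E -> R) : Prop :=
  forall j, j < size s -> (wt l (F j) < wt l (F k))%R = (j < k).

Hypothesis bls : broken_line_shelling R Bs s.

Lemma nth_basis k : k < size s -> F k \in Bs.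
Proof. by case: bls => -[_ <-] _; apply: mem_nth. Qed.

Lemma index_basis_lt (D : {set E}) : D \in Bs -> index D s < size s.
Proof. by case: bls => -[_ <-] _; rewrite index_mem. Qed.

Lemma nth_index_basis (D : {set E}) : D \in Bs -> F (index D s) = D.
Proof. by case: bls => -[_ <-] _; apply: nth_index. Qed.

Lemma index_nth_basis k : k < size s -> index (F k) s = k.
Proof. by case: bls => -[uniq_s _] _ ltk; rewrite index_uniq. Qed.

Lemma prefix_faceS k (G H : {set E}) : G \subset H -> prefix_face k H -> prefix_face k G.
Proof.
move=> sGH /existsP[m /andP[ltmk sHm]]; apply/existsP; exists m.
by rewrite ltmk (subset_trans sGH).
Qed.

Lemma lighter_prefix_face k (D : {set E}) l : D \in Bs -> shelling_witness k l ->
  (wt l D < wt l (F k))%R -> prefix_face k D.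
Proof.
move=> Ds wit ltDk; apply/existsP; exists (Ordinal (index_basis_lt Ds)) => /=.
by rewrite -wit ?index_basis_lt // nth_index_basis // ltDk subxx.
Qed.

Lemma restr_set_sub k : restr_set k \subset F k.
Proof. by apply/subsetP => e; rewrite inE => /andP[]. Qed.

(* If G lies in an earlier, hence lighter, facet F m, an improving exchange F k - e + f with
   e outside F m is lighter than F k, hence earlier: e is in the restriction set but not in G. *)
Lemma prefix_faceN k (G : {set E}) : k < size s -> G \subset F k ->
  ~~ prefix_face k G = (restr_set k \subset G).
Proof.
move=> ltk sGk; apply/idP/idP => [newG|sRG].
  apply/subsetP => e; rewrite inE => /andP[eFk oldFke]; apply: contraNT newG => eG.
  by apply: prefix_faceS oldFke; apply/subsetP => z zG; rewrite !inE (subsetP sGk) // andbT;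
    apply: contraNneq eG => <-.
apply/negP => /existsP[m /andP[ltmk sGm]].
have [l wit] := bls.2 k ltk.
have ltwt : (wt l (F m) < wt l (F k))%R by rewrite wit.
have [e [f [/setDP[eFk eNFm] /setDP[fFm fNFk] Ds ltfe]]] :=
  basis_improving_exchange bases_Bs (nth_basis ltk) (nth_basis (ltn_ord m)) ltwt.
have : prefix_face k (f |: (F k :\ e)).
  apply: lighter_prefix_face Ds wit _.
  by rewrite wt_exchange // -addrA gtrDl addrC subr_lt0.
move/(prefix_faceS (subsetUr _ _)) => oldFke.
have eR : e \in restr_set k by rewrite inE eFk.
by rewrite (subsetP sGm) ?(subsetP sRG) in eNFm.
Qed.

Lemma new_faceE k (G : {set E}) : k < size s ->
  [exists m : 'I_(size s), (m <= k) && (G \subset F m)] &&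
  [forall m : 'I_(size s), (m < k) ==> ~~ (G \subset F m)]
  = (G \subset F k) && ~~ prefix_face k G.
Proof.
move=> ltk; apply/andP/andP => [[/existsP[m /andP[lemk sGm]] /forallP notold]|[sGk newG]].
  have mk : nat_of_ord m = k.
    by apply/eqP; rewrite eqn_leq lemk leqNgt; apply: contraL sGm => /(implyP (notold m)).
  split; first by rewrite -mk.
  by apply/existsP => -[m' /andP[ltm'k sGm']]; move: (notold m'); rewrite ltm'k sGm'.
split; first by apply/existsP; exists (Ordinal ltk); rewrite leqnn.
apply/forallP => m; apply/implyP => ltmk; apply: contra newG => sGm.
by apply/existsP; exists m; rewrite ltmk.
Qed.

Lemma is_restr_restr_set k : k < size s -> is_restr s k (restr_set k).
Proof.
move=> ltk; rewrite /is_restr restr_set_sub; apply/forallP => G; apply/eqP.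
rewrite new_faceE //; have [sGk|] := boolP (G \subset F k); last by rewrite andbF.
by rewrite prefix_faceN // andbT.
Qed.

Lemma is_restr_uniq k (R1 R2 : {set E}) : is_restr s k R1 -> is_restr s k R2 -> R1 = R2.
Proof.
suff sub X Y : is_restr s k X -> is_restr s k Y -> Y \subset X.
  by move=> h1 h2; apply/eqP; rewrite eqEsubset !(sub _ _ h1 h2, sub _ _ h2 h1).
move=> /andP[sX /forallP hX] /andP[sY /forallP hY].
by move: (hX X) (hY X); rewrite subxx sX => /eqP -> /eqP /esym /andP[].
Qed.

Lemma restrE k : k < size s -> restr s k = restr_set k.
Proof.
move=> ltk; rewrite /restr; case: pickP => [X|/(_ (restr_set k))].
  by move/is_restr_uniq; apply; apply: is_restr_restr_set.
by rewrite is_restr_restr_set.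
Qed.

Lemma first_facet_le (G : {set E}) m : G \subset F m -> first_facet G <= m.
Proof. by move=> sGm; rewrite leqNgt; apply/negP => /(before_find set0); rewrite sGm. Qed.

Lemma first_facet_lt (G : {set E}) : indep Bs G -> first_facet G < size s.
Proof.
case: bls => -[_ memBs] _ /indepP[D Ds sGD].
by rewrite /first_facet -has_find; apply/hasP; exists D; rewrite ?memBs.
Qed.

Lemma sub_first_facet (G : {set E}) : first_facet G < size s -> G \subset F (first_facet G).
Proof.
by move=> ltGs; apply: (nth_find set0 (a := fun D : {set E} => G \subset D)); rewrite has_find.
Qed.

Lemma prefix_face_first_facet k (G : {set E}) : k <= size s ->
  prefix_face k G = (first_facet G < k).
Proof.
move=> leks; apply/existsP/idP => [[m /andP[ltmk sGm]]|ltGk].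
  exact: leq_ltn_trans (first_facet_le sGm) ltmk.
have ltGs : first_facet G < size s by apply: leq_trans leks.
by exists (Ordinal ltGs); rewrite ltGk sub_first_facet.
Qed.

Lemma first_facetP k (G : {set E}) : k < size s ->
  (restr_set k \subset G) && (G \subset F k) = (first_facet G == k).
Proof.
move=> ltk; apply/idP/eqP => [/andP[sRG sGk]|ffG].
  rewrite -prefix_faceN // (prefix_face_first_facet _ (ltnW ltk)) -leqNgt in sRG.
  by apply/eqP; rewrite eqn_leq first_facet_le.
have sGk : G \subset F k.
  by rewrite -ffG sub_first_facet ?ffG.
by rewrite sGk -prefix_faceN // (prefix_face_first_facet _ (ltnW ltk)) ffG ltnn.
Qed.

Lemma first_facet_spec (G : {set E}) : indep Bs G ->
  (restr_set (first_facet G) \subset G) && (G \subset F (first_facet G)).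
Proof. by move=> iG; rewrite first_facetP ?first_facet_lt. Qed.

Lemma first_facet_restr_set k : k < size s -> first_facet (restr_set k) = k.
Proof. by move=> ltk; apply/eqP; rewrite -first_facetP // subxx restr_set_sub. Qed.

(* Dropping the element a that pushes the first facet containing R - a as late as possible
   leaves exactly the restriction set of that facet. *)
Lemma restr_set_drop k : k < size s -> restr_set k != set0 ->
  exists2 a, a \in restr_set k & restr_set (first_facet (restr_set k :\ a)) = restr_set k :\ a.
Proof.
move=> ltk /set0Pn[a0 a0K]; set K := restr_set k.
have iK (X : {set E}) : X \subset K -> indep Bs X.
  move=> sXK; apply/indepP; exists (F k); first exact: nth_basis.
  exact: subset_trans sXK (restr_set_sub k).
have [a aK maxa] := arg_maxnP (fun a => first_facet (K :\ a)) a0K.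
exists a => //; have /andP[sRz sKaz] := first_facet_spec (iK _ (subD1set K a)).
set z := first_facet (K :\ a) in sRz sKaz *.
have ltz : z < size s by apply/first_facet_lt/iK/subD1set.
apply/eqP; rewrite eqEsubset sRz /=; apply/subsetP => g gKa; apply: contraT => gRz.
move: (gKa); rewrite in_setD1 => /andP[ga gK].
have /andP[_ sKgw] := first_facet_spec (iK _ (subD1set K g)).
set w := first_facet (K :\ g) in sKgw *.
have sG0 : K :\ a :\ g \subset K :\ g.
  by apply/subsetP => x; rewrite !in_setD1 => /and3P[-> _ ->].
have : ~~ prefix_face z (K :\ a :\ g).
  rewrite prefix_faceN //; last exact: subset_trans (subD1set _ _) sKaz.
  apply/subsetP => x xR; rewrite in_setD1 (subsetP sRz) ?andbT //.
  by apply: contraNneq gRz => <-.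
rewrite (prefix_face_first_facet _ (ltnW ltz)) -leqNgt => lezG0.
have lewz : w <= z := maxa g gK.
have wz : w = z.
  by apply/eqP; rewrite eqn_leq lewz (leq_trans lezG0) // first_facet_le // (subset_trans sG0).
have sKz : K \subset F z.
  apply/subsetP => x xK; have [->|xg] := eqVneq x g; first exact: (subsetP sKaz).
  by rewrite -wz (subsetP sKgw) // in_setD1 xg.
have zk : z = k.
  apply/eqP; rewrite eqn_leq first_facet_le ?(subset_trans (subD1set _ _) (restr_set_sub k)) //=.
  by rewrite -{1}(first_facet_restr_set ltk) first_facet_le.
by have := subsetP sRz a; rewrite zk in_setD1 eqxx => /(_ aK).
Qed.

End Shelling.

Section PinnedShelling.
Variables (E : finType) (Bs : {set {set E}}) (R : realType) (s : seq {set E}).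
Hypothesis bases_Bs : matroid_bases Bs.
Hypothesis pinned : pinned_bls R Bs s.

Local Notation F k := (nth set0 s k).

Lemma pinned_bls_broken_line : broken_line_shelling R Bs s.
Proof. by case: pinned => ord wit; split => // k /wit[l [wit_l _]]; exists l. Qed.

Local Notation bls := pinned_bls_broken_line.

Lemma size_gt0 : 0 < size s.
Proof. by case: bases_Bs => /set0Pn[B /(index_basis_lt bls)]; case: (size s). Qed.

Lemma first_basis : F 0 \in Bs.
Proof. exact (nth_basis bls size_gt0). Qed.

Lemma index_first : index (F 0) s = 0.
Proof. exact (index_nth_basis bls size_gt0). Qed.

(* Symmetric exchange with F 0 trades e in F k :\: F 0 for some f; pinning makes F 0 lighter
   than F 0 - f + e, so F k - e + f is lighter than F k, hence earlier. *)
Lemma setD_first_sub_restr_set k : k < size s -> F k :\: F 0 \subset restr_set s k.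
Proof.
move=> ltk; apply/subsetP => e eD.
have [f fD /andP[Fkfs F0es]] := basis_sym_exchange bases_Bs (nth_basis bls ltk) first_basis eD.
move: eD fD => /setDP[eFk eF0] /setDP[fF0 fFk].
have [l [wit pin]] := pinned.2 k ltk.
have ltfe : (l f < l e)%R.
  set D := e |: (F 0 :\ f) in F0es.
  have D_gt0 : 0 < index D s.
    rewrite lt0n; apply: contraNneq eF0 => D0.
    by rewrite -D0 (nth_index_basis bls F0es) setU11.
  have := pin _ (introT andP (conj D_gt0 (index_basis_lt bls F0es))).
  by rewrite (nth_index_basis bls F0es) wt_exchange // -addrA ltrDl addrC subr_gt0.
have : prefix_face s k (f |: (F k :\ e)).
  apply: (lighter_prefix_face bls Fkfs wit).
  by rewrite wt_exchange // -addrA gtrDl addrC subr_lt0.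
by rewrite inE eFk; apply: prefix_faceS (subsetUr _ _).
Qed.

Lemma restrBE (B' : {set E}) : B' \in Bs -> restrB s B' = restr_set s (index B' s).
Proof. by move=> B's; rewrite /restrB (restrE bases_Bs bls (index_basis_lt bls B's)). Qed.

Lemma nth_first_facetE (B' G : {set E}) : B' \in Bs -> indep Bs G ->
  (F (first_facet s G) == B') = (restrB s B' \subset G) && (G \subset B').
Proof.
move=> B's iG; rewrite restrBE // -{3}(nth_index_basis bls B's).
rewrite (first_facetP bases_Bs bls _ (index_basis_lt bls B's)).
apply/eqP/eqP => [<-|->]; last exact: (nth_index_basis bls B's).
by rewrite (index_nth_basis bls (first_facet_lt bls iG)).
Qed.

Lemma restrB_sub (B' : {set E}) : B' \in Bs -> restrB s B' \subset B'.
Proof.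
move=> B's; rewrite restrBE //.
by have := restr_set_sub s (index B' s); rewrite (nth_index_basis bls B's).
Qed.

Lemma setD_first_sub_restrB (B' : {set E}) : B' \in Bs -> B' :\: F 0 \subset restrB s B'.
Proof.
move=> B's; rewrite restrBE // -{1}(nth_index_basis bls B's).
exact: (setD_first_sub_restr_set (index_basis_lt bls B's)).
Qed.

Lemma restrB_setD_first (B' : {set E}) : B' \in Bs -> restrB s B' :\: F 0 = B' :\: F 0.
Proof.
move=> B's; apply/eqP; rewrite eqEsubset setSD ?restrB_sub //=.
by rewrite subsetD setD_first_sub_restrB // -setI_eq0 setIDAC setDIl setDv setI0 eqxx.
Qed.

Lemma restrB_first : restrB s (F 0) = set0.
Proof.
rewrite restrBE ?first_basis // index_first; apply/setP => e; rewrite !inE.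
by apply/negP => /andP[_ /existsP[m]].
Qed.

Lemma restrB_eq0 (B' : {set E}) : B' \in Bs -> (restrB s B' == set0) = (B' == F 0).
Proof.
move=> B's; apply/eqP/eqP => [R0|->]; last exact: restrB_first.
apply: (basis_sub_eq bases_Bs B's first_basis).
by have := setD_first_sub_restrB B's; rewrite R0 subset0 setD_eq0.
Qed.

Lemma restrB_meets_setD (A : {set E}) : A \in Bs -> restrB s A != set0 ->
  exists2 i, i \in restrB s A & i \notin F 0.
Proof.
move=> As; rewrite restrB_eq0 // => AF0.
have /set0Pn[i /setDP[iA iF0]] : A :\: F 0 != set0.
  by apply: contra AF0; rewrite setD_eq0 => /(basis_sub_eq bases_Bs As first_basis) ->.
by exists i => //; apply: (subsetP (setD_first_sub_restrB As)); rewrite inE iF0.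
Qed.

Lemma restrB_set1_notin_first (A : {set E}) i : A \in Bs -> restrB s A = [set i] -> i \notin F 0.
Proof.
move=> As RA; have [|j] := restrB_meets_setD As; last by rewrite RA inE => /eqP ->.
by rewrite RA; apply/set0Pn; exists i; rewrite set11.
Qed.

Lemma exists_restrB_set1 i : i \notin F 0 -> indep Bs [set i] ->
  exists2 A, A \in Bs & restrB s A = [set i].
Proof.
move=> iF0 ii; have /andP[sRi siF] := first_facet_spec bases_Bs bls ii.
have ltk := first_facet_lt bls ii.
exists (F (first_facet s [set i])); first exact: (nth_basis bls ltk).
rewrite restrBE ?(nth_basis bls ltk) // (index_nth_basis bls ltk); apply/eqP.
rewrite eqEsubset sRi sub1set /=.
by apply: (subsetP (setD_first_sub_restr_set ltk)); rewrite inE iF0 -sub1set.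
Qed.

Lemma int_minE (m : {set E}) : int_min Bs s m = (m == F 0).
Proof.
apply/idP/eqP => [/andP[ms /forallP/(_ (F 0))]|->].
  by rewrite first_basis /int_le restrB_first subset0 restrB_eq0 // => /eqP.
by rewrite /int_min first_basis; apply/forall_inP => C _; rewrite /int_le restrB_first sub0set.
Qed.

Lemma int_lt_first (A : {set E}) : int_lt s (F 0) A = (restrB s A != set0).
Proof. by rewrite /int_lt restrB_first proper0. Qed.

Lemma int_atomE (A : {set E}) : int_atom Bs s A = (A \in Bs) && [exists i, restrB s A == [set i]].
Proof.
apply/existsP/andP => [[m /andP[]]|[As /existsP[i /eqP RA]]].
  rewrite int_minE => /eqP-> /and4P[_ As]; rewrite int_lt_first => RA0 noC; split=> //.
  have [i iRA iF0] := restrB_meets_setD As RA0; apply/existsP; exists i.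
  have ii : indep Bs [set i].
    by apply: indepS (basis_indep As); rewrite sub1set (subsetP (restrB_sub As)).
  have [C Cs RC] := exists_restrB_set1 iF0 ii.
  rewrite eq_sym eqEproper sub1set iRA /=; apply: contra noC => ltiA.
  by apply/exists_inP; exists C; rewrite // int_lt_first /int_lt RC ltiA -card_gt0 cards1.
exists (F 0); rewrite int_minE eqxx /int_covers first_basis As int_lt_first RA.
rewrite -card_gt0 cards1 /=; apply/exists_inP => -[C Cs].
rewrite int_lt_first /int_lt RA => /andP[RC0 /proper_card].
by rewrite cards1 ltnS leqn0 cards_eq0 (negbTE RC0).
Qed.

Lemma mem_Bi_set (X A : {set E}) i : A \in Bs -> restrB s A = [set i] ->
  (A \in Bi_set Bs s X) = (i \in X).
Proof.
move=> As RA; rewrite inE As RA /=.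
by apply/exists_inP/idP => [[j jX /eqP/set1_inj->]|iX] //; exists i.
Qed.

Lemma Bi_set_inj (X Y : {set E}) :
  {in X :|: Y, forall i, (i \notin F 0) && indep Bs [set i]} ->
  (Bi_set Bs s X == Bi_set Bs s Y) = (X == Y).
Proof.
move=> ok; apply/eqP/eqP => [eqXY|-> //]; apply/setP => i.
have [/ok/andP[iF0 ii]|] := boolP (i \in X :|: Y).
  by have [A As RA] := exists_restrB_set1 iF0 ii; rewrite -!(mem_Bi_set _ As RA) eqXY.
by rewrite inE negb_or => /andP[/negbTE-> /negbTE->].
Qed.

Lemma atoms_belowE (B' : {set E}) : B' \in Bs -> atoms_below Bs s B' = Bi_set Bs s (B' :\: F 0).
Proof.
move=> B's; apply/setP => A; rewrite !inE; have [As|] //= := boolP (A \in Bs).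
rewrite int_atomE As /=; apply/andP/exists_inP => [[/existsP[i /eqP RA] leAB']|[i iD /eqP RA]].
  exists i; rewrite ?RA // inE (restrB_set1_notin_first As RA) (subsetP (restrB_sub B's)) //.
  by rewrite (subsetP leAB') // RA set11.
split; first by apply/existsP; exists i; rewrite RA.
by rewrite /int_le RA sub1set (subsetP (setD_first_sub_restrB B's)).
Qed.

Lemma atoms_below_eq_Bi_set (B' I : {set E}) : B' \in Bs -> indep Bs I -> [disjoint I & F 0] ->
  (atoms_below Bs s B' == Bi_set Bs s I) = (B' :\: F 0 == I).
Proof.
move=> B's iI dI; rewrite atoms_belowE //; apply: Bi_set_inj => i.
rewrite inE => /orP[/setDP[iB' ->]|iI']; first by rewrite (indepS _ (basis_indep B's)) ?sub1set.
by rewrite (disjointFr dI iI') (indepS _ iI) ?sub1set.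
Qed.

Lemma restrB_cover (B' : {set E}) : B' \in Bs -> restrB s B' != set0 ->
  exists2 C, int_covers Bs s C B' & #|restrB s B'| = (#|restrB s C|).+1.
Proof.
move=> B's; rewrite restrBE // => R0; set k := index B' s in R0 *.
have ltk : k < size s := index_basis_lt bls B's.
have [a aR RC] := restr_set_drop bases_Bs bls ltk R0.
set z := first_facet s (restr_set s k :\ a) in RC.
have iRa : indep Bs (restr_set s k :\ a).
  apply/indepP; exists B' => //; rewrite -(nth_index_basis bls B's).
  exact: subset_trans (subD1set _ _) (restr_set_sub s k).
have ltz : z < size s := first_facet_lt bls iRa.
have Cs := nth_basis bls ltz.
have RCE : restrB s (F z) = restr_set s k :\ a by rewrite restrBE // (index_nth_basis bls ltz).
exists (F z); last by rewrite RCE (cardsD1 a) aR.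
rewrite /int_covers Cs B's /int_lt RCE restrBE // properD1 //=.
apply/exists_inP => -[D Ds /andP[/proper_card lt1 /proper_card]].
by rewrite (cardsD1 a (restr_set s k)) aR /= ?add1n ltnS leqNgt lt1.
Qed.

Lemma int_rank_funE (rho : {set E} -> nat) : int_rank_fun Bs s rho ->
  {in Bs, forall B', rho B' = #|restrB s B'|}.
Proof.
move=> [rho_min rho_cover] B'; have [n] := ubnP #|restrB s B'|.
elim: n => // n IH in B' * => ltn B's.
have [R0|R0] := eqVneq (restrB s B') set0.
  rewrite R0 cards0; apply: rho_min; rewrite int_minE -restrB_eq0 //; exact/eqP.
have [C cov cardR] := restrB_cover B's R0.
have /and3P[Cs _ _] := cov.
by rewrite (rho_cover _ _ cov) cardR IH // -ltnS -cardR.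
Qed.

End PinnedShelling.

Section SubsetSums.
Variables (R : comPzRingType) (E : finType).
Local Open Scope ring_scope.

Lemma prod_if_disjoint (a b : R) (A B : {set E}) : [disjoint A & B] ->
  \prod_i (if i \in A then a else if i \in B then b else 1) = a ^+ #|A| * b ^+ #|B|.
Proof.
move=> dAB; rewrite (bigID (fun i => i \in A)) /= (eq_bigr (fun=> a)) => [|i ->//].
rewrite prodr_const (bigID (fun i => i \in B)) /=.
rewrite (eq_bigr (fun=> b)) => [|i /andP[/negbTE-> ->]//].
rewrite prodr_const big1 => [|i /andP[/negbTE-> /negbTE->]//]; rewrite mulr1.
congr (_ * _ ^+ _); apply: eq_card => i; rewrite unfold_in /=.
by case: (boolP (i \in B)) => [/(disjointFl dAB)->|]; rewrite ?andbT ?andbF.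
Qed.

Lemma sum_interval (x y : R) (K T : {set E}) : K \subset T ->
  \sum_(J : {set E} | (K \subset J) && (J \subset T)) x ^+ #|J| * y ^+ (#|T| - #|J|)
  = x ^+ #|K| * (x + y) ^+ (#|T| - #|K|).
Proof.
move=> sKT; pose f i := if i \in T then x else 0.
pose g i := if i \in K then 0 else if i \in T then y else 1.
have disjD (A : {set E}) : [disjoint A & T :\: A].
  by rewrite -setI_eq0 setDE setICA setICr setI0.
transitivity (\prod_i (f i + g i)); last first.
  rewrite -(cardsDS sKT) -prod_if_disjoint //; apply: eq_bigr => i _; rewrite /f /g inE.
  by case: (boolP (i \in K)) => [/(subsetP sKT)->|]; case: (i \in T); rewrite ?addr0 ?add0r.
rewrite bigA_distr [RHS](bigID (fun J : {set E} => (K \subset J) && (J \subset T))) /=.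
rewrite [X in _ = _ + X]big1 ?addr0 => [|J /nandP[/subsetPn[i iK iJ]|/subsetPn[i iJ iT]]].
- apply: eq_bigr => J /andP[sKJ sJT]; rewrite -(cardsDS sJT) -prod_if_disjoint //.
  apply: eq_bigr => i _; rewrite /f /g inE.
  case: (boolP (i \in J)) => [/(subsetP sJT)->//|iJ].
  by rewrite (contraNF (subsetP sKJ i) iJ).
- by rewrite (bigD1 i) //= (negbTE iJ) /g iK mul0r.
- by rewrite (bigD1 i) //= iJ /f (negbTE iT) mul0r.
Qed.

End SubsetSums.

Section HVector.
Variable E : finType.
Local Open Scope ring_scope.

Lemma hpoly_faces (face : pred {set E}) :
  hpoly face = \sum_(J | face J) 'X^#|J| * (1 - 'X) ^+ (cx_d face - #|J|).
Proof.
rewrite /hpoly (partition_big (fun J : {set E} => inord #|J| : 'I_(cx_d face).+1) xpredT) //=.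
apply: eq_bigr => k _; rewrite (eq_bigl [in [set X | face X & #|X| == k]]) => [|J]; last first.
  rewrite inE; have [fJ|] //= := boolP (face J).
  by rewrite -val_eqE /= inordK // ltnS (leq_bigmax_cond (F := fun Y : {set E} => #|Y|)).
rewrite (eq_bigr (fun _ => 'X^k * (1 - 'X) ^+ (cx_d face - k))); last first.
  by move=> J /[!inE] /andP[_ /eqP->].
by rewrite sumr_const /fnum -natz rmorph_nat mulr_natl mulrnAl.
Qed.

Section PartitionedComplex.
Variables (T : finType) (face : pred {set E}) (facets : {set T}).
Variables (top bot : T -> {set E}) (facet_of : {set E} -> T) (d : nat).
Hypothesis facet_of_mem : forall J, face J -> facet_of J \in facets.
Hypothesis facet_of_interval : forall t J, t \in facets ->
  (face J && (facet_of J == t)) = (bot t \subset J) && (J \subset top t).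
Hypothesis bot_sub_top : forall t, t \in facets -> bot t \subset top t.
Hypothesis card_top : forall t, t \in facets -> #|top t| = d.
Hypothesis facets_neq0 : facets != set0.

Lemma cx_d_partition : cx_d face = d.
Proof.
apply/eqP; rewrite eqn_leq; apply/andP; split.
  apply/bigmax_leqP => J fJ; have tJ := facet_of_mem fJ.
  have := facet_of_interval J tJ; rewrite fJ eqxx => /esym/andP[_ /subset_leq_card].
  by rewrite card_top.
have /set0Pn[t tF] := facets_neq0.
have /andP[ftop _] : face (top t) && (facet_of (top t) == t).
  by rewrite facet_of_interval // bot_sub_top // subxx.
by rewrite -(card_top tF) (leq_bigmax_cond (F := fun Y : {set E} => #|Y|)).
Qed.

Lemma hpoly_partition : hpoly face = \sum_(t in facets) 'X^#|bot t|.
Proof.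
rewrite hpoly_faces cx_d_partition (partition_big facet_of [in facets]) //=.
apply: eq_bigr => t tF; rewrite (eq_bigl _ _ (fun J => facet_of_interval J tF)).
by rewrite -(card_top tF) sum_interval ?bot_sub_top // addrC subrK expr1n mulr1.
Qed.

Lemma hvec_partition j : hvec face j = #|[set t in facets | #|bot t| == j]|%:Z.
Proof.
rewrite /hvec hpoly_partition coef_sum.
rewrite (eq_bigr (fun t => if #|bot t| == j then 1 else 0)) => [|t _]; last first.
  by rewrite coefXn eq_sym; case: (_ == _).
rewrite -big_mkcondr (eq_bigl [in [set t in facets | #|bot t| == j]]); last first.
  by move=> t; rewrite inE.
by rewrite sumr_const natz.
Qed.

End PartitionedComplex.
End HVector.

Section ContractionRestriction.
Variables (E : finType) (Bs : {set {set E}}) (R : realType) (s : seq {set E}) (I : {set E}).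
Hypothesis bases_Bs : matroid_bases Bs.
Hypothesis pinned : pinned_bls R Bs s.
Hypothesis indep_I : indep Bs I.
Hypothesis disj_I : [disjoint I & nth set0 s 0].

Local Notation F k := (nth set0 s k).
Local Notation bls := (pinned_bls_broken_line pinned).
Local Notation face := (contr_restr_indep Bs I (F 0)).
Local Notation facets := [set B' in Bs | B' :\: F 0 == I].
Local Notation facet_of J := (F (first_facet s (J :|: I))).

Lemma faceE (J : {set E}) : face J = (J \subset F 0) && indep Bs (J :|: I).
Proof. exact: contr_restr_indepE. Qed.

Lemma restrB_facetE (B' : {set E}) : B' \in facets -> restrB s B' :&: F 0 = restrB s B' :\: I.
Proof.
rewrite inE => /andP[B's /eqP <-].
by rewrite -(restrB_setD_first bases_Bs pinned B's) setDDr setDv set0U.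
Qed.

Lemma facet_of_mem (J : {set E}) : face J -> facet_of J \in facets.
Proof.
rewrite faceE => /andP[sJ0 iJI].
have /andP[sRJI sJIF] := first_facet_spec bases_Bs bls iJI.
have ltk := first_facet_lt bls iJI.
rewrite inE (nth_basis bls ltk); apply/eqP/setP => x; rewrite inE.
apply/andP/idP => [[xF0 xF]|xI].
  have := subsetP sRJI x (subsetP (setD_first_sub_restr_set bases_Bs pinned ltk) x _).
  by rewrite !inE xF0 xF => /(_ isT) /orP[/(subsetP sJ0)|//]; rewrite (negbTE xF0).
by rewrite (disjointFr disj_I xI) (subsetP sJIF) // inE xI orbT.
Qed.

Lemma facet_of_interval (B' J : {set E}) : B' \in facets ->
  (face J && (facet_of J == B')) = (restrB s B' :&: F 0 \subset J) && (J \subset B' :&: F 0).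
Proof.
move=> B'F; have := B'F; rewrite inE => /andP[B's /eqP BI].
rewrite restrB_facetE // subsetI subDset [I :|: J]setUC.
have [sJ0|] := boolP (J \subset F 0); last by rewrite faceE => /negbTE->; rewrite !andbF.
have sIB' : I \subset B' by rewrite -BI subsetDl.
have -> : (J \subset B') = (J :|: I \subset B') by rewrite subUset sIB' andbT.
rewrite faceE sJ0 andbT.
have [iJI|niJI] /= := boolP (indep Bs (J :|: I)).
  exact: (nth_first_facetE bases_Bs pinned B's iJI).
by apply/esym/negbTE; apply: contra niJI => /andP[_ sJIB']; apply/indepP; exists B'.
Qed.

Lemma hvec_contr_restr j :
  hvec face j = (#|[set B' in facets | #|restrB s B' :&: F 0| == j]|%:Z)%R.
Proof.
apply: (hvec_partition (top := fun B' => B' :&: F 0) (d := #|F 0| - #|I|)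
  facet_of_mem facet_of_interval).
- by move=> B'; rewrite inE => /andP[B's _]; apply/setSI/(restrB_sub bases_Bs pinned B's).
- move=> B'; rewrite inE => /andP[B's /eqP BI].
  have := cardsID (F 0) B'; rewrite BI (card_bases bases_Bs B's (first_basis bases_Bs pinned)).
  lia.
- by apply/set0Pn; exists (facet_of set0); apply: facet_of_mem; rewrite faceE sub0set set0U.
Qed.

Lemma restrB_atoms_facets j :
  [set B' in Bs | (#|restrB s B'| == #|I| + j) && (atoms_below Bs s B' == Bi_set Bs s I)]
  = [set B' in facets | #|restrB s B' :&: F 0| == j].
Proof.
apply/setP => B'; rewrite !inE; have [B's|] //= := boolP (B' \in Bs).
rewrite (atoms_below_eq_Bi_set bases_Bs pinned B's indep_I disj_I).
have [BI|] := eqVneq (B' :\: F 0) I; rewrite ?andbF // andbT.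
rewrite -(cardsID (F 0) (restrB s B')) (restrB_setD_first bases_Bs pinned B's) BI.
by rewrite addnC eqn_add2l.
Qed.

End ContractionRestriction.

Theorem lemma7p2 (E : finType) (R : realType) (Bs : {set {set E}})
  (s : seq {set E}) (B I : {set E}) :
  matroid_bases Bs ->
  pinned_bls R Bs s ->
  B = nth set0 s 0 ->
  indep Bs I ->
  [disjoint I & B] ->
  (forall j : nat,
     (#|[set B' in Bs | (#|restrB s B'| == #|I| + j)%N
                        && (atoms_below Bs s B' == Bi_set Bs s I)]|%:Z
      = hvec (contr_restr_indep Bs I B) j)%R) /\
  (forall rho : {set E} -> nat, int_rank_fun Bs s rho ->
   forall j : nat,
     (#|[set B' in Bs | (rho B' == #|I| + j)%N
                        && (atoms_below Bs s B' == Bi_set Bs s I)]|%:Z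
      = hvec (contr_restr_indep Bs I B) j)%R).
Proof.
move=> bases_Bs pinned -> iI dI.
have restrB_count j : (#|[set B' in Bs | (#|restrB s B'| == #|I| + j)
                        && (atoms_below Bs s B' == Bi_set Bs s I)]|%:Z
                       = hvec (contr_restr_indep Bs I (nth set0 s 0)) j)%R.
  by rewrite (restrB_atoms_facets bases_Bs pinned iI dI) (hvec_contr_restr bases_Bs pinned iI dI).
split=> // rho rho_rank j; rewrite -restrB_count; congr (Posz _); apply: eq_card => B'.
rewrite !inE; have [B's|] //= := boolP (B' \in Bs).
by rewrite (int_rank_funE bases_Bs pinned rho_rank B's).
Qed.
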